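(* Let $G=\{(x,R(x)) : x\in[0,1]\}$ be the graph of $R$. Then its closure in $\mathbb R^2$ is $$\overline{G}=G\cup\bigcup_{x\in\mathscr D\setminus\{1\}}\big(\{x\}\times I_x\big).$$ Moreover, for every $x\in\mathscr D\setminus\{0,1\}$, $$I_x=\Big[\liminf_{t\searrow x}R(t),\ \limsup_{t\searrow x}R(t)\Big]\quad\text{and}\quad R(x)\notin I_x.$$
   Context: Define $\rho$ on binary words: for $b=b_1b_2\dots$, $\rho(b)$ is obtained by deleting every digit $b_n=0$ and replacing every $b_n=1$ by $0$ if $n$ is odd and by $1$ if $n$ is even. For $x\in(0,1]$ let $\beta(x)$ be the unique binary expansion of $x$ with infinitely many $1$'s. Define $R:[0,1]\to[0,1]$ by $R(0)=2/3$ and, for $x\in(0,1]$, $R(x)=\sum_{n\ge1}c_n2^{-n}$ where $c=\rho(\beta(x))$. $\mathscr D$ is the set of dyadic rationals in $[0,1]$. For $x\in\mathscr D\setminus\{1\}$ with finite binary expression $x=0.x_1x_2\dots x_n$ (terminal zeros irrelevant; empty word for $x=0$), let $u=\rho(x_1\dots x_n)$ (a finite word) and let $I_x$ be the closed interval of all $y\in[0,1]$ having a binary expansion beginning with $u$, i.e. $I_x=[0.u000\dots,\,0.u111\dots]$; in particular $I_0=[0,1]$. *)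

From Stdlib Require Import Reals List ClassicalEpsilon.
From Coquelicot Require Import Coquelicot.
Open Scope R_scope.

(* Binary words.  An infinite word b_1 b_2 ... is a stream [b : nat -> bool]
   with [b i] = digit b_(i+1) (0-based storage, 1-based positions as in the paper).
   A finite word is a [list bool]. *)

Definition bit (c : bool) : R := if c then 1 else 0.

Definition stream_val (b : nat -> bool) : R :=
  Series (fun i => bit (b i) / 2 ^ (S i)).

Fixpoint list_val (w : list bool) : R :=
  match w with
  | nil => 0
  | c :: w' => (bit c + list_val w') / 2
  end.

(* rho on finite words.  [rho_from i w]: w starts at 0-based index i, i.e. at
   position n = i+1.  A digit 0 is deleted; a digit 1 at position n is replaced
   by 0 if n is odd (i even) and by 1 if n is even (i odd). *)
Fixpoint rho_from (i : nat) (w : list bool) : list bool :=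
  match w with
  | nil => nil
  | false :: w' => rho_from (S i) w'
  | true :: w' => Nat.odd i :: rho_from (S i) w'
  end.

Definition rho (w : list bool) : list bool := rho_from 0 w.

Definition prefix (b : nat -> bool) (m : nat) : list bool := map b (seq 0 m).

Definition is_prefix_of (w : list bool) (c : nat -> bool) : Prop :=
  forall i, (i < length w)%nat -> c i = nth i w false.

Definition inh_stream : inhabited (nat -> bool) := inhabits (fun _ => true).

(* rho on infinite words (with infinitely many 1's): the infinite word whose
   prefixes are the images under rho of the prefixes of b (rho acts letter by
   letter, so this is exactly the deletion/replacement description). *)
Definition rho_stream (b : nat -> bool) : nat -> bool :=
  epsilon inh_stream (fun c => forall m, is_prefix_of (rho (prefix b m)) c).

Definition infinitely_many_ones (b : nat -> bool) : Prop :=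
  forall N, exists n, (N <= n)%nat /\ b n = true.

Definition is_beta (x : R) (b : nat -> bool) : Prop :=
  infinitely_many_ones b /\ stream_val b = x.

Definition beta (x : R) : nat -> bool := epsilon inh_stream (is_beta x).

(* The map R : [0,1] -> [0,1] (values outside [0,1] are irrelevant). *)
Definition Rmap (x : R) : R :=
  match Rle_dec x 0 with
  | left _ => 2 / 3
  | right _ => stream_val (rho_stream (beta x))
  end.

(* I_x for the dyadic x = 0.w (w a finite binary expression of x):
   u = rho(w), I_x = [0.u000..., 0.u111...] = [0.u, 0.u + 2^(-|u|)]. *)
Definition Ix (w : list bool) (y : R) : Prop :=
  list_val (rho w) <= y <= list_val (rho w) + / 2 ^ length (rho w).

Definition in_closure_graph (f : R -> R) (a b : R) : Prop :=
  forall eps, 0 < eps ->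
    exists t, 0 <= t <= 1 /\ sqrt ((t - a) ^ 2 + (f t - b) ^ 2) < eps.

Definition liminf_right (f : R -> R) (x : R) : Rbar :=
  Lub_Rbar (fun s => exists d, 0 < d /\
    Finite s = Glb_Rbar (fun y => exists t, x < t < x + d /\ y = f t)).

Definition limsup_right (f : R -> R) (x : R) : Rbar :=
  Glb_Rbar (fun s => exists d, 0 < d /\
    Finite s = Lub_Rbar (fun y => exists t, x < t < x + d /\ y = f t)).

(* The whole proof rests on one localization property of R (Rmap_cell): if the
   expansion beta(t) begins with a finite word p -- i.e. t lies in the dyadic
   cell (0.p, 0.p + 2^-|p|] -- then R(t) lies in the closed cylinder I_p of
   reals whose expansion begins with rho(p).  Together with the surjectivity of
   rho on finite words this gives density (Rmap_dense_right): just to the right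
   of a dyadic x = 0.w, R comes arbitrarily close to every point of I_w, and it
   never leaves I_w on the cell of w.  Hence the right lower/upper limits at x
   are the ends of I_w.  Since |rho(prefix of beta(a))| grows without bound, R
   is left continuous on (0,1] and right continuous at non-dyadic points; so a
   closure point (a,b) off the graph must be approached from the right of a
   dyadic a, and then b lies in the closed set I_a.  Finally R(x) escapes I_x
   because beta(0.w'1) begins with w'0111. *)

From Stdlib Require Import Reals List Lra Lia Classical ClassicalEpsilon.
From Coquelicot Require Import Coquelicot.
Open Scope R_scope.

Lemma pow2_pos n : 0 < 2 ^ n.
Proof. apply pow_lt; lra. Qed.

Lemma inv_pow2_pos n : 0 < / 2 ^ n.
Proof. apply Rinv_0_lt_compat, pow2_pos. Qed.

Lemma inv_pow2_le1 n : / 2 ^ n <= 1.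
Proof. rewrite <- Rinv_1. apply Rinv_le_contravar; [lra|]. apply pow_R1_Rle; lra. Qed.

Lemma inv_pow2_add m n : / 2 ^ (m + n) = / 2 ^ m * / 2 ^ n.
Proof. rewrite pow_add, Rinv_mult. reflexivity. Qed.

Lemma inv_pow2_S n : / 2 ^ S n = / 2 ^ n / 2.
Proof. simpl. rewrite Rinv_mult. unfold Rdiv. ring. Qed.

Lemma inv_pow2_antitone m n : (m <= n)%nat -> / 2 ^ n <= / 2 ^ m.
Proof. intros H. apply Rinv_le_contravar; [apply pow2_pos|]. apply Rle_pow; auto; lra. Qed.

Lemma inv_pow2_small e : 0 < e -> exists N, / 2 ^ N < e.
Proof.
  intros He. assert (Ha : Rabs (/2) < 1) by (rewrite Rabs_pos_eq; lra).
  destruct (pow_lt_1_zero _ Ha e He) as [N HN]. exists N.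
  specialize (HN N (le_n N)). rewrite pow_inv, Rabs_pos_eq in HN; auto.
  left; apply inv_pow2_pos.
Qed.

Lemma eq_of_dyadic_close a b : (forall m, Rabs (a - b) <= / 2 ^ m) -> a = b.
Proof.
  intros H. destruct (Req_dec (a - b) 0) as [|Hne]; [lra|]. exfalso.
  destruct (inv_pow2_small _ (Rabs_pos_lt _ Hne)) as [N HN]. specialize (H N). lra.
Qed.

(* Finite words.  [in_cyl u] is the closed interval [0.u000..., 0.u111...] of
   reals having a binary expansion starting with [u]; in particular [Ix w] is
   [in_cyl (rho w)].  [dyadic_cell p] is the half-open interval of the reals
   in (0,1] whose expansion with infinitely many 1's starts with [p]. *)

Definition in_cyl (u : list bool) (y : R) : Prop :=
  list_val u <= y <= list_val u + / 2 ^ length u.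

Definition dyadic_cell (p : list bool) (t : R) : Prop :=
  list_val p < t <= list_val p + / 2 ^ length p.

Lemma bit_bounds c : 0 <= bit c <= 1.
Proof. destruct c; simpl; lra. Qed.

Lemma list_val_app u v : list_val (u ++ v) = list_val u + list_val v / 2 ^ length u.
Proof.
  induction u as [|c u IH]; simpl.
  - field.
  - rewrite IH. field. apply pow_nonzero; lra.
Qed.

Lemma list_val_bounds w : 0 <= list_val w <= 1 - / 2 ^ length w.
Proof.
  induction w as [|c w IH]; simpl.
  - lra.
  - rewrite Rinv_mult. assert (H := inv_pow2_pos (length w)).
    destruct c; simpl; lra.
Qed.

Lemma list_val_zeros K : list_val (repeat false K) = 0.
Proof. induction K as [|K IH]; simpl; [|rewrite IH; simpl]; lra. Qed.

Lemma in_cyl_dist u y z : in_cyl u y -> in_cyl u z -> Rabs (y - z) <= / 2 ^ length u.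
Proof. unfold in_cyl. intros Hy Hz. apply Rabs_le. lra. Qed.

Lemma in_cyl_closed u b :
  (forall e, 0 < e -> exists y, in_cyl u y /\ Rabs (y - b) < e) -> in_cyl u b.
Proof.
  unfold in_cyl. intros H.
  destruct (Rle_dec (list_val u) b) as [Hlo|Hlo].
  - destruct (Rle_dec b (list_val u + / 2 ^ length u)) as [Hhi|Hhi]; [lra|].
    destruct (H (b - (list_val u + / 2 ^ length u))) as [y [Hy Hb]]; [lra|].
    apply Rabs_def2 in Hb. lra.
  - destruct (H (list_val u - b)) as [y [Hy Hb]]; [lra|].
    apply Rabs_def2 in Hb. lra.
Qed.

Lemma in_cyl_refine u y : in_cyl u y -> exists c, in_cyl (u ++ c :: nil) y.
Proof.
  unfold in_cyl. intros Hy. assert (H := inv_pow2_pos (length u)).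
  destruct (Rle_dec y (list_val u + / 2 ^ length u / 2));
    [exists false | exists true];
    rewrite list_val_app, length_app, inv_pow2_add; simpl; unfold Rdiv in *; lra.
Qed.

Lemma in_cyl_refine_n L : forall u y, in_cyl u y ->
  exists v, length v = L /\ in_cyl (u ++ v) y.
Proof.
  induction L as [|L IH]; intros u y Hy.
  - exists nil. rewrite app_nil_r. auto.
  - destruct (in_cyl_refine u y Hy) as [c Hc].
    destruct (IH _ _ Hc) as [v [Hl Hv]].
    exists (c :: v). rewrite <- app_assoc in Hv. simpl. auto.
Qed.

Lemma dyadic_cell_unique p q t : length p = length q ->
  dyadic_cell p t -> dyadic_cell q t -> p = q.
Proof.
  unfold dyadic_cell. revert q t.
  induction p as [|a p IH]; intros q t Hl Hp Hq.
  - destruct q; simpl in Hl; congruence.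
  - destruct q as [|a' q]; simpl in Hl; [discriminate|]. injection Hl as Hl.
    simpl list_val in *. simpl length in *. rewrite inv_pow2_S in *. rewrite Hl in Hp.
    assert (Hb1 := list_val_bounds p). assert (Hb2 := list_val_bounds q). rewrite Hl in Hb1.
    assert (HE := inv_pow2_pos (length q)).
    destruct a, a'; simpl bit in *; try (exfalso; lra); f_equal.
    + apply (IH q (2 * t - 1)); auto; rewrite ?Hl; lra.
    + apply (IH q (2 * t)); auto; rewrite ?Hl; lra.
Qed.

Lemma dyadic_cell_extension w u :
  dyadic_cell w (list_val (w ++ u) + / 2 ^ length (w ++ u)).
Proof.
  unfold dyadic_cell. rewrite list_val_app, length_app, inv_pow2_add.
  assert (Hu := list_val_bounds u).
  assert (H1 := inv_pow2_pos (length w)). assert (H2 := inv_pow2_pos (length u)).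
  replace (list_val w + list_val u / 2 ^ length w + / 2 ^ length w * / 2 ^ length u)
    with (list_val w + / 2 ^ length w * (list_val u + / 2 ^ length u))
    by (unfold Rdiv; ring).
  split.
  - assert (0 < / 2 ^ length w * (list_val u + / 2 ^ length u))
      by (apply Rmult_lt_0_compat; lra). lra.
  - assert (/ 2 ^ length w * (list_val u + / 2 ^ length u) <= / 2 ^ length w * 1)
      by (apply Rmult_le_compat_l; lra). lra.
Qed.

Lemma dyadic_successor p : list_val p + / 2 ^ length p < 1 ->
  exists q, list_val q = list_val p + / 2 ^ length p.
Proof.
  induction p as [|c p IH]; intros H; simpl in H |- *.
  - rewrite Rinv_1 in H. lra.
  - rewrite Rinv_mult in *. assert (Hb := list_val_bounds p).
    destruct (Rlt_dec (list_val p + / 2 ^ length p) 1) as [Hl|Hl].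
    + destruct (IH Hl) as [q Hq]. exists (c :: q). simpl. rewrite Hq. lra.
    + destruct c; simpl bit in *; [lra|].
      exists (true :: nil). simpl. lra.
Qed.

Lemma last_one_decomposition w : list_val w <> 0 ->
  exists w' j, w = w' ++ true :: repeat false j.
Proof.
  induction w as [|a w IH] using rev_ind; intros H.
  - simpl in H. lra.
  - destruct a.
    + exists w, 0%nat. reflexivity.
    + rewrite list_val_app in H. simpl in H.
      destruct IH as [w' [j E]].
      { intros H0. apply H. rewrite H0. field. apply pow_nonzero; lra. }
      exists w', (S j). rewrite E, <- app_assoc. simpl. rewrite repeat_cons. reflexivity.
Qed.

Definition shiftn (m : nat) (b : nat -> bool) : nat -> bool := fun i => b (m + i)%nat.

Lemma geometric_series : is_series (fun i => / 2 ^ S i) 1.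
Proof.
  assert (Ha : Rabs (/2) < 1) by (rewrite Rabs_pos_eq; lra).
  replace 1 with (/ (1 - /2) * /2) by field.
  apply (is_series_ext (fun n => (/2) ^ n * /2)).
  - intros n. simpl. rewrite pow_inv. field. apply pow_nonzero; lra.
  - apply is_series_scal_r, is_series_geom, Ha.
Qed.

Lemma digit_term_bounds (b : nat -> bool) n : 0 <= bit (b n) / 2 ^ S n <= / 2 ^ S n.
Proof.
  assert (H := inv_pow2_pos (S n)). destruct (bit_bounds (b n)).
  unfold Rdiv. split; nra.
Qed.

Lemma stream_val_ex b : ex_series (fun i => bit (b i) / 2 ^ S i).
Proof.
  apply (@ex_series_le R_AbsRing R_CompleteNormedModule _ (fun i => / 2 ^ S i)).
  - intros n. destruct (digit_term_bounds b n). rewrite Rabs_pos_eq; auto.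
  - exists 1. apply geometric_series.
Qed.

Lemma stream_val_ext b c : (forall i, b i = c i) -> stream_val b = stream_val c.
Proof. intros H. unfold stream_val. apply Series_ext. intros n. rewrite H. reflexivity. Qed.

Lemma stream_val_bounds b : 0 <= stream_val b <= 1.
Proof.
  unfold stream_val. split.
  - replace 0 with (Series (fun n => 0 * / 2 ^ S n)) by (rewrite Series_scal_l; ring).
    apply Series_le; [|apply stream_val_ex].
    intros n. rewrite Rmult_0_l. split; [lra|apply digit_term_bounds].
  - rewrite <- (is_series_unique _ _ geometric_series).
    apply Series_le; [apply digit_term_bounds|]. exists 1; apply geometric_series.
Qed.

Lemma stream_val_cons b :
  stream_val b = (bit (b 0%nat) + stream_val (shiftn 1 b)) / 2.
Proof.
  unfold stream_val. rewrite Series_incr_1 by apply stream_val_ex.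
  rewrite (Series_ext _ (fun i => (bit (shiftn 1 b i) / 2 ^ S i) * /2)).
  - rewrite Series_scal_r. simpl. field.
  - intros n. unfold shiftn. simpl. field. apply pow_nonzero; lra.
Qed.

Lemma prefix_length b m : length (prefix b m) = m.
Proof. unfold prefix. rewrite length_map, length_seq. reflexivity. Qed.

Lemma prefix_S b m : prefix b (S m) = b 0%nat :: prefix (shiftn 1 b) m.
Proof. unfold prefix. simpl. rewrite <- seq_shift, map_map. reflexivity. Qed.

Lemma prefix_add b m k : prefix b (m + k) = prefix b m ++ map b (seq m k).
Proof. unfold prefix. rewrite seq_app, map_app. reflexivity. Qed.

Lemma stream_val_split b m :
  stream_val b = list_val (prefix b m) + stream_val (shiftn m b) / 2 ^ m.
Proof.
  revert b; induction m as [|m IH]; intros b.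
  - simpl. rewrite (stream_val_ext (shiftn 0 b) b) by reflexivity. field.
  - rewrite prefix_S, stream_val_cons, IH. simpl.
    rewrite (stream_val_ext (shiftn m (shiftn 1 b)) (shiftn (S m) b)) by reflexivity.
    field. apply pow_nonzero; lra.
Qed.

Lemma nth_prefix b m i : (i < m)%nat -> nth i (prefix b m) false = b i.
Proof.
  intros Hi. unfold prefix.
  rewrite nth_indep with (d' := b 0%nat) by (rewrite length_map, length_seq; assumption).
  rewrite map_nth, seq_nth by assumption. reflexivity.
Qed.

Lemma prefix_is_prefix b m : is_prefix_of (prefix b m) b.
Proof. intros i Hi. rewrite prefix_length in Hi. rewrite nth_prefix; auto. Qed.

Lemma is_prefix_eq u c : is_prefix_of u c -> prefix c (length u) = u.
Proof.
  intros H. apply nth_ext with (d := false) (d' := false).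
  - apply prefix_length.
  - intros n Hn. rewrite prefix_length in Hn. rewrite nth_prefix, H; auto.
Qed.

Lemma stream_in_cyl u c : is_prefix_of u c -> in_cyl u (stream_val c).
Proof.
  intros H. unfold in_cyl. rewrite (stream_val_split c (length u)), is_prefix_eq by assumption.
  destruct (stream_val_bounds (shiftn (length u) c)).
  assert (H2 := inv_pow2_pos (length u)).
  assert (0 <= stream_val (shiftn (length u) c) / 2 ^ length u <= / 2 ^ length u).
  { unfold Rdiv. split; [apply Rmult_le_pos; lra|].
    rewrite <- (Rmult_1_l (/ 2 ^ length u)) at 2.
    apply Rmult_le_compat_r; lra. }
  lra.
Qed.

Lemma infinitely_many_ones_shift b m :
  infinitely_many_ones b -> infinitely_many_ones (shiftn m b).
Proof.
  intros H N. destruct (H (m + N)%nat) as [n [Hn Hb]].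
  exists (n - m)%nat. split; [lia|]. unfold shiftn. replace (m + (n - m))%nat with n by lia.
  assumption.
Qed.

Lemma stream_val_pos b : infinitely_many_ones b -> 0 < stream_val b.
Proof.
  intros H. destruct (H 0%nat) as [n [_ Hn]].
  rewrite (stream_val_split b n), stream_val_cons.
  replace (shiftn n b 0%nat) with true by (unfold shiftn; rewrite Nat.add_0_r; auto).
  simpl bit.
  destruct (list_val_bounds (prefix b n)).
  destruct (stream_val_bounds (shiftn 1 (shiftn n b))).
  assert (0 < (1 + stream_val (shiftn 1 (shiftn n b))) / 2 / 2 ^ n)
    by (apply Rdiv_lt_0_compat; [lra|apply pow2_pos]).
  lra.
Qed.

Lemma prefix_cell b m : infinitely_many_ones b -> dyadic_cell (prefix b m) (stream_val b).
Proof.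
  intros H. unfold dyadic_cell. rewrite prefix_length.
  destruct (stream_in_cyl (prefix b m) b (prefix_is_prefix b m)) as [_ Hhi].
  rewrite prefix_length in Hhi. split; [|assumption].
  rewrite (stream_val_split b m).
  assert (Htail := stream_val_pos _ (infinitely_many_ones_shift b m H)).
  assert (0 < stream_val (shiftn m b) / 2 ^ m) by (apply Rdiv_lt_0_compat; [|apply pow2_pos]; lra).
  lra.
Qed.

Lemma prefix_of_cell b p : infinitely_many_ones b ->
  dyadic_cell p (stream_val b) -> prefix b (length p) = p.
Proof.
  intros Hb Hp. apply (dyadic_cell_unique _ _ (stream_val b)); auto.
  - apply prefix_length.
  - apply prefix_cell; assumption.
Qed.

(* Existence of beta(x): the greedy expansion of x in (0,1] that uses the
   digit 0 exactly when the current remainder is <= 1/2 has infinitely many 1's. *)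

Definition greedy_step (y : R) : R := if Rle_dec y (1/2) then 2 * y else 2 * y - 1.

Fixpoint greedy_rem (x : R) (n : nat) : R :=
  match n with O => x | S n => greedy_step (greedy_rem x n) end.

Definition greedy_digits (x : R) (n : nat) : bool :=
  if Rle_dec (greedy_rem x n) (1/2) then false else true.

Lemma greedy_rem_range x n : 0 < x <= 1 -> 0 < greedy_rem x n <= 1.
Proof.
  intros H; induction n as [|n IH]; simpl; auto.
  unfold greedy_step; destruct (Rle_dec (greedy_rem x n) (1/2)); lra.
Qed.

Lemma greedy_rem_S x n : greedy_rem x (S n) = greedy_rem (greedy_step x) n.
Proof. induction n as [|n IH]; simpl in *; [|rewrite IH]; reflexivity. Qed.

Lemma greedy_step_eq x : x = (bit (greedy_digits x 0) + greedy_step x) / 2.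
Proof. unfold greedy_digits, greedy_step; simpl; destruct (Rle_dec x (1/2)); simpl; lra. Qed.

Lemma greedy_expansion m x :
  x = list_val (prefix (greedy_digits x) m) + greedy_rem x m / 2 ^ m.
Proof.
  revert x; induction m as [|m IH]; intros x.
  - simpl. lra.
  - rewrite prefix_S.
    replace (prefix (shiftn 1 (greedy_digits x)) m) with (prefix (greedy_digits (greedy_step x)) m)
      by (unfold prefix; apply map_ext; intros a; unfold shiftn, greedy_digits;
          change (1 + a)%nat with (S a); rewrite greedy_rem_S; reflexivity).
    rewrite greedy_rem_S. simpl list_val.
    rewrite (greedy_step_eq x) at 1. rewrite (IH (greedy_step x)) at 1.
    simpl. field. apply pow_nonzero; lra.
Qed.

Lemma greedy_digits_val x : 0 < x <= 1 -> stream_val (greedy_digits x) = x.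
Proof.
  intros Hx. apply eq_of_dyadic_close. intros m.
  rewrite (stream_val_split _ m). pose proof (greedy_expansion m x) as E.
  destruct (stream_val_bounds (shiftn m (greedy_digits x))).
  destruct (greedy_rem_range x m Hx).
  assert (HI := inv_pow2_pos m). unfold Rdiv in *.
  assert (stream_val (shiftn m (greedy_digits x)) * / 2 ^ m <= 1 * / 2 ^ m)
    by (apply Rmult_le_compat_r; lra).
  assert (greedy_rem x m * / 2 ^ m <= 1 * / 2 ^ m) by (apply Rmult_le_compat_r; lra).
  assert (0 <= stream_val (shiftn m (greedy_digits x)) * / 2 ^ m) by (apply Rmult_le_pos; lra).
  assert (0 <= greedy_rem x m * / 2 ^ m) by (apply Rmult_le_pos; lra).
  apply Rabs_le. lra.
Qed.

Lemma greedy_digits_ones x : 0 < x <= 1 -> infinitely_many_ones (greedy_digits x).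
Proof.
  intros Hx N. apply NNPP. intros Hc.
  assert (Hdouble : forall j, greedy_rem x (N + j) = 2 ^ j * greedy_rem x N).
  { induction j as [|j IH]; [rewrite Nat.add_0_r; simpl; ring|].
    rewrite Nat.add_succ_r. simpl. rewrite Rmult_assoc, <- IH. unfold greedy_step.
    destruct (Rle_dec (greedy_rem x (N + j)) (1/2)); [reflexivity|].
    exfalso. apply Hc. exists (N + j)%nat. split; [lia|].
    unfold greedy_digits. destruct (Rle_dec (greedy_rem x (N + j)) (1/2)); tauto. }
  destruct (greedy_rem_range x N Hx) as [Hpos _].
  destruct (inv_pow2_small _ Hpos) as [j Hj].
  destruct (greedy_rem_range x (N + j) Hx) as [_ Hle]. rewrite Hdouble in Hle.
  assert (H2 := pow2_pos j).
  apply (Rmult_lt_compat_l (2 ^ j)) in Hj; auto. rewrite Rinv_r in Hj; lra.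
Qed.

Lemma beta_spec x : 0 < x <= 1 -> is_beta x (beta x).
Proof.
  intros Hx. unfold beta. apply epsilon_spec. exists (greedy_digits x).
  split; [apply greedy_digits_ones | apply greedy_digits_val]; assumption.
Qed.

Lemma beta_prefix_of_cell p t : dyadic_cell p t -> prefix (beta t) (length p) = p.
Proof.
  intros Ht. assert (Hb := list_val_bounds p).
  assert (Hx : 0 < t <= 1) by (unfold dyadic_cell in Ht; lra).
  destruct (beta_spec t Hx) as [Hi Hv].
  apply prefix_of_cell; [assumption|]. rewrite Hv. assumption.
Qed.

Lemma rho_from_app i u v : rho_from i (u ++ v) = rho_from i u ++ rho_from (i + length u) v.
Proof.
  revert i; induction u as [|a u IH]; intros i; simpl.
  - rewrite Nat.add_0_r; reflexivity.
  - rewrite Nat.add_succ_r. destruct a; simpl; rewrite IH; reflexivity.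
Qed.

Lemma rho_from_zeros i K : rho_from i (repeat false K) = nil.
Proof. revert i; induction K as [|K IH]; intros i; simpl; auto. Qed.

Lemma odd_S n : Nat.odd (S n) = negb (Nat.odd n).
Proof. rewrite Nat.odd_succ, Nat.negb_odd. reflexivity. Qed.

Lemma rho_from_surjective v : forall i, exists z, rho_from i z = v.
Proof.
  induction v as [|d v IH]; intros i.
  - exists nil; reflexivity.
  - destruct (Bool.bool_dec (Nat.odd i) d) as [E|E].
    + destruct (IH (S i)) as [z Hz]. exists (true :: z). simpl. rewrite E, Hz; reflexivity.
    + destruct (IH (S (S i))) as [z Hz]. exists (false :: true :: z). simpl.
      rewrite Hz, odd_S.
      destruct (Nat.odd i), d; simpl in *; congruence.
Qed.

Lemma rho_prefix_mono b m m' : (m <= m')%nat ->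
  exists s, rho (prefix b m') = rho (prefix b m) ++ s.
Proof.
  intros H. replace m' with (m + (m' - m))%nat by lia.
  rewrite prefix_add. unfold rho. rewrite rho_from_app. eauto.
Qed.

Lemma rho_prefix_unbounded b : infinitely_many_ones b ->
  forall j, exists m, (j <= length (rho (prefix b m)))%nat.
Proof.
  intros Hb j. induction j as [|j [m Hm]]; [exists 0%nat; lia|].
  destruct (Hb m) as [n [Hn Hbn]]. exists (S n).
  destruct (rho_prefix_mono b m n Hn) as [s Hs].
  replace (S n) with (n + 1)%nat by lia. rewrite prefix_add. unfold rho in *.
  rewrite rho_from_app, Hs. simpl. rewrite Hbn. rewrite !length_app. simpl. lia.
Qed.

Lemma rho_stream_spec b : infinitely_many_ones b ->
  forall m, is_prefix_of (rho (prefix b m)) (rho_stream b).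
Proof.
  intros Hb. unfold rho_stream. apply epsilon_spec.
  assert (HM : forall j, {m | (S j <= length (rho (prefix b m)))%nat}).
  { intros j. apply constructive_indefinite_description, rho_prefix_unbounded, Hb. }
  exists (fun j => nth j (rho (prefix b (proj1_sig (HM j)))) false).
  intros m i Hi. destruct (HM i) as [m1 Hm1]. simpl.
  destruct (Nat.le_ge_cases m m1) as [Hle|Hle].
  - destruct (rho_prefix_mono b m m1 Hle) as [s Hs]. rewrite Hs, app_nth1; auto.
  - destruct (rho_prefix_mono b m1 m Hle) as [s Hs]. rewrite Hs, app_nth1; auto.
Qed.

Lemma Rmap_in_cyl x m : 0 < x <= 1 -> in_cyl (rho (prefix (beta x) m)) (Rmap x).
Proof.
  intros Hx. unfold Rmap. destruct (Rle_dec x 0); [lra|].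
  destruct (beta_spec x Hx) as [Hi _].
  apply stream_in_cyl, rho_stream_spec, Hi.
Qed.

Lemma Rmap_cell p t : dyadic_cell p t -> in_cyl (rho p) (Rmap t).
Proof.
  intros Ht. rewrite <- (beta_prefix_of_cell p t Ht).
  apply Rmap_in_cyl. assert (Hb := list_val_bounds p). unfold dyadic_cell in Ht. lra.
Qed.

Lemma Rmap_bounds x : 0 <= Rmap x <= 1.
Proof. unfold Rmap. destruct (Rle_dec x 0); [lra|apply stream_val_bounds]. Qed.

(* Choose v with y in the cylinder of rho(w) v, a word z with
   rho_from (|w|+K) z = v, and take t the right end of the cell of w 0^K z. *)
Lemma Rmap_dense_right w y eps d : Ix w y -> 0 < eps -> 0 < d ->
  exists t, list_val w < t < list_val w + d /\ Rabs (Rmap t - y) < eps.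
Proof.
  intros Hy He Hd.
  destruct (inv_pow2_small _ He) as [L HL]. destruct (inv_pow2_small _ Hd) as [K HK].
  destruct (in_cyl_refine_n L _ _ Hy) as [v [Hlv Hv]].
  destruct (rho_from_surjective v (length w + K)) as [z Hz].
  set (w0 := w ++ repeat false K).
  set (W := w0 ++ z).
  assert (Hw0 : list_val w0 = list_val w /\ length w0 = (length w + K)%nat).
  { unfold w0. rewrite list_val_app, list_val_zeros, length_app, repeat_length.
    split; [unfold Rdiv; ring | reflexivity]. }
  assert (HrW : rho W = rho w ++ v).
  { unfold W, w0, rho. rewrite !rho_from_app, rho_from_zeros, length_app, repeat_length.
    rewrite app_nil_r, Nat.add_0_l, Hz. reflexivity. }
  exists (list_val W + / 2 ^ length W). split.
  - destruct (dyadic_cell_extension w0 z) as [H1 H2]. fold W in H1, H2.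
    destruct Hw0 as [E1 E2]. rewrite E1, E2, inv_pow2_add in H2.
    assert (/ 2 ^ length w * / 2 ^ K <= 1 * / 2 ^ K)
      by (apply Rmult_le_compat_r; [left; apply inv_pow2_pos|apply inv_pow2_le1]).
    lra.
  - assert (Ht := Rmap_cell W _ (dyadic_cell_extension W nil)).
    rewrite app_nil_r, HrW in Ht.
    assert (Hdist := in_cyl_dist _ _ _ Ht Hv).
    rewrite length_app, Hlv, inv_pow2_add in Hdist.
    assert (/ 2 ^ length (rho w) * / 2 ^ L <= 1 * / 2 ^ L)
      by (apply Rmult_le_compat_r; [left; apply inv_pow2_pos|apply inv_pow2_le1]).
    lra.
Qed.

(* On the cell of the m-th prefix of beta(a), R
   oscillates by at most 2^-|rho(prefix)|, which tends to 0.  The cell contains a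
   left neighbourhood of a, and also a right one unless a is a cell endpoint,
   i.e. unless a is dyadic. *)

Definition left_continuous_at (f : R -> R) (a : R) : Prop :=
  forall d, 0 < d -> exists eta, 0 < eta /\
    forall t, a - eta < t <= a -> Rabs (f t - f a) < d.

Definition right_continuous_at (f : R -> R) (a : R) : Prop :=
  forall d, 0 < d -> exists eta, 0 < eta /\
    forall t, a <= t < a + eta -> Rabs (f t - f a) < d.

Lemma Rmap_cell_oscillation a t m : 0 < a <= 1 ->
  dyadic_cell (prefix (beta a) m) t ->
  Rabs (Rmap t - Rmap a) <= / 2 ^ length (rho (prefix (beta a) m)).
Proof. intros Ha Ht. apply in_cyl_dist; [apply Rmap_cell | apply Rmap_in_cyl]; assumption. Qed.

Lemma Rmap_small_cell a d : 0 < a <= 1 -> 0 < d ->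
  exists p, dyadic_cell p a /\ forall t, dyadic_cell p t -> Rabs (Rmap t - Rmap a) < d.
Proof.
  intros Ha Hd. destruct (beta_spec a Ha) as [Hi Hv].
  destruct (inv_pow2_small _ Hd) as [N HN].
  destruct (rho_prefix_unbounded _ Hi N) as [m Hm].
  exists (prefix (beta a) m). split.
  - rewrite <- Hv at 2. apply prefix_cell, Hi.
  - intros t Ht. assert (H := Rmap_cell_oscillation a t m Ha Ht).
    assert (H' := inv_pow2_antitone _ _ Hm). lra.
Qed.

Lemma Rmap_left_continuous a : 0 < a <= 1 -> left_continuous_at Rmap a.
Proof.
  intros Ha d Hd. destruct (Rmap_small_cell a d Ha Hd) as [p [Hp Hosc]].
  unfold dyadic_cell in Hp.
  exists (a - list_val p). split; [lra|].
  intros t Ht. apply Hosc. unfold dyadic_cell. lra.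
Qed.

Lemma Rmap_right_continuous_nondyadic a : 0 < a < 1 ->
  (forall w, a <> list_val w) -> right_continuous_at Rmap a.
Proof.
  intros Ha Hnd d Hd. destruct (Rmap_small_cell a d ltac:(lra) Hd) as [p [Hp Hosc]].
  unfold dyadic_cell in Hp.
  assert (Hlt : a < list_val p + / 2 ^ length p).
  { destruct (Rlt_dec a (list_val p + / 2 ^ length p)) as [|Hge]; [assumption|].
    destruct (dyadic_successor p) as [q Hq]; [lra|].
    exfalso. apply (Hnd q). lra. }
  exists (list_val p + / 2 ^ length p - a). split; [lra|].
  intros t Ht. apply Hosc. unfold dyadic_cell. lra.
Qed.

(* Writing x = 0.w'1, beta(x) starts
   with w'0111, so R(x) lies in the cylinder of rho(w') c' c c' (c' = not c),
   while I_x is the cylinder of rho(w') c, with c = rho of the digit 1 of x. *)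
Lemma in_cyl_alternating_disjoint u c y :
  in_cyl (u ++ c :: nil) y -> ~ in_cyl (u ++ negb c :: c :: negb c :: nil) y.
Proof.
  unfold in_cyl. rewrite !list_val_app, !length_app, !inv_pow2_add.
  assert (H := inv_pow2_pos (length u)).
  destruct c; simpl; unfold Rdiv; intros; lra.
Qed.

Lemma Rmap_dyadic_outside w : list_val w <> 0 -> ~ Ix w (Rmap (list_val w)).
Proof.
  intros H. destruct (last_one_decomposition w H) as [w' [j E]]. subst w.
  set (k := length w').
  set (p := w' ++ false :: true :: true :: true :: nil).
  assert (Hx : list_val (w' ++ true :: repeat false j) = list_val w' + / 2 ^ k / 2).
  { rewrite list_val_app. simpl. rewrite list_val_zeros. fold k. field. apply pow_nonzero; lra. }
  assert (Hcell : dyadic_cell p (list_val (w' ++ true :: repeat false j))).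
  { unfold dyadic_cell, p. rewrite Hx, list_val_app, length_app, inv_pow2_add. fold k.
    assert (HE := inv_pow2_pos k). simpl. unfold Rdiv. lra. }
  assert (Hrw : rho (w' ++ true :: repeat false j) = rho w' ++ Nat.odd k :: nil).
  { unfold rho. rewrite rho_from_app. simpl. rewrite rho_from_zeros. reflexivity. }
  assert (Hrp : rho p = rho w' ++ negb (Nat.odd k) :: Nat.odd k :: negb (Nat.odd k) :: nil).
  { unfold p, rho. rewrite rho_from_app. simpl. fold k.
    rewrite !odd_S, Bool.negb_involutive. reflexivity. }
  unfold Ix. rewrite Hrw. intros HI.
  apply (in_cyl_alternating_disjoint _ _ _ HI). rewrite <- Hrp. apply Rmap_cell, Hcell.
Qed.

Lemma lb_le_approached (E : R -> Prop) (c : Rbar) lo : is_lb_Rbar E c ->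
  (forall eps, 0 < eps -> exists y, E y /\ y < lo + eps) -> Rbar_le c (Finite lo).
Proof.
  intros Hc Happ. destruct c as [r| |]; simpl; auto.
  - destruct (Rle_dec r lo) as [|Hn]; auto.
    destruct (Happ (r - lo)) as [y [Hy Hlt]]; [lra|]. specialize (Hc y Hy). simpl in Hc. lra.
  - destruct (Happ 1) as [y [Hy _]]; [lra|]. exact (Hc y Hy).
Qed.

Lemma ub_ge_approached (E : R -> Prop) (c : Rbar) hi : is_ub_Rbar E c ->
  (forall eps, 0 < eps -> exists y, E y /\ hi - eps < y) -> Rbar_le (Finite hi) c.
Proof.
  intros Hc Happ. destruct c as [r| |]; simpl; auto.
  - destruct (Rle_dec hi r) as [|Hn]; auto.
    destruct (Happ (hi - r)) as [y [Hy Hlt]]; [lra|]. specialize (Hc y Hy). simpl in Hc. lra.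
  - destruct (Happ 1) as [y [Hy _]]; [lra|]. exact (Hc y Hy).
Qed.

Definition right_window (f : R -> R) (x d : R) (y : R) : Prop :=
  exists t, x < t < x + d /\ y = f t.

Lemma liminf_right_eq f x lo d0 : 0 < d0 ->
  (forall t, x < t < x + d0 -> lo <= f t) ->
  (forall d eps, 0 < d -> 0 < eps -> exists t, x < t < x + d /\ f t < lo + eps) ->
  liminf_right f x = Finite lo.
Proof.
  intros Hd0 Hlo Happ.
  assert (Hwin : forall d, 0 < d -> forall eps, 0 < eps ->
            exists y, right_window f x d y /\ y < lo + eps).
  { intros d Hd eps He. destruct (Happ d eps Hd He) as [t [Ht Hf]].
    exists (f t). split; [exists t|]; auto. }
  unfold liminf_right. apply is_lub_Rbar_unique. split.
  - intros s [d [Hd Hs]]. change (Rbar_le (Finite s) (Finite lo)). rewrite Hs.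
    apply (lb_le_approached (right_window f x d)); [apply Glb_Rbar_correct | apply Hwin, Hd].
  - intros b Hb. apply Hb. exists d0. split; [assumption|].
    symmetry. apply is_glb_Rbar_unique. split.
    + intros y [t [Ht ->]]. apply Hlo, Ht.
    + intros c Hc. apply (lb_le_approached (right_window f x d0)); [exact Hc | apply Hwin, Hd0].
Qed.

Lemma limsup_right_eq f x hi d0 : 0 < d0 ->
  (forall t, x < t < x + d0 -> f t <= hi) ->
  (forall d eps, 0 < d -> 0 < eps -> exists t, x < t < x + d /\ hi - eps < f t) ->
  limsup_right f x = Finite hi.
Proof.
  intros Hd0 Hhi Happ.
  assert (Hwin : forall d, 0 < d -> forall eps, 0 < eps ->
            exists y, right_window f x d y /\ hi - eps < y).
  { intros d Hd eps He. destruct (Happ d eps Hd He) as [t [Ht Hf]].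
    exists (f t). split; [exists t|]; auto. }
  unfold limsup_right. apply is_glb_Rbar_unique. split.
  - intros s [d [Hd Hs]]. change (Rbar_le (Finite hi) (Finite s)). rewrite Hs.
    apply (ub_ge_approached (right_window f x d)); [apply Lub_Rbar_correct | apply Hwin, Hd].
  - intros b Hb. apply Hb. exists d0. split; [assumption|].
    symmetry. apply is_lub_Rbar_unique. split.
    + intros y [t [Ht ->]]. apply Hhi, Ht.
    + intros c Hc. apply (ub_ge_approached (right_window f x d0)); [exact Hc | apply Hwin, Hd0].
Qed.

Lemma Rmap_right_window_in_Ix w t :
  list_val w < t < list_val w + / 2 ^ length w -> Ix w (Rmap t).
Proof. intros Ht. apply Rmap_cell. unfold dyadic_cell. lra. Qed.

Lemma Rmap_liminf_dyadic w : liminf_right Rmap (list_val w) = Finite (list_val (rho w)).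
Proof.
  apply liminf_right_eq with (d0 := / 2 ^ length w); [apply inv_pow2_pos| |].
  - intros t Ht. apply Rmap_right_window_in_Ix, Ht.
  - intros d eps Hd He.
    assert (HI : Ix w (list_val (rho w))).
    { unfold Ix. assert (H := inv_pow2_pos (length (rho w))). lra. }
    destruct (Rmap_dense_right w _ eps d HI He Hd) as [t [Ht Hclose]].
    exists t. split; [exact Ht|]. apply Rabs_def2 in Hclose. lra.
Qed.

Lemma Rmap_limsup_dyadic w :
  limsup_right Rmap (list_val w) = Finite (list_val (rho w) + / 2 ^ length (rho w)).
Proof.
  apply limsup_right_eq with (d0 := / 2 ^ length w); [apply inv_pow2_pos| |].
  - intros t Ht. apply Rmap_right_window_in_Ix, Ht.
  - intros d eps Hd He.
    assert (HI : Ix w (list_val (rho w) + / 2 ^ length (rho w))).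
    { unfold Ix. assert (H := inv_pow2_pos (length (rho w))). lra. }
    destruct (Rmap_dense_right w _ eps d HI He Hd) as [t [Ht Hclose]].
    exists t. split; [exact Ht|]. apply Rabs_def2 in Hclose. lra.
Qed.

Lemma in_cyl_nil y : in_cyl nil y <-> 0 <= y <= 1.
Proof. unfold in_cyl. simpl. rewrite Rinv_1. split; intros; lra. Qed.

Lemma sqrt_sum_squares_bounds u v :
  Rabs u <= sqrt (u ^ 2 + v ^ 2) /\ Rabs v <= sqrt (u ^ 2 + v ^ 2) /\
  sqrt (u ^ 2 + v ^ 2) <= Rabs u + Rabs v.
Proof.
  assert (Hu := Rabs_pos u). assert (Hv := Rabs_pos v).
  rewrite <- (pow2_abs u), <- (pow2_abs v).
  repeat split.
  - rewrite <- (sqrt_pow2 (Rabs u)) at 1 by lra. apply sqrt_le_1_alt. nra.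
  - rewrite <- (sqrt_pow2 (Rabs v)) at 1 by lra. apply sqrt_le_1_alt. nra.
  - rewrite <- (sqrt_pow2 (Rabs u + Rabs v)) by lra. apply sqrt_le_1_alt. nra.
Qed.

Lemma closure_graph_box f a b : in_closure_graph f a b <->
  forall e, 0 < e -> exists t, 0 <= t <= 1 /\ Rabs (t - a) < e /\ Rabs (f t - b) < e.
Proof.
  split.
  - intros Hcl e He. destruct (Hcl e He) as [t [Ht Hs]]. exists t.
    destruct (sqrt_sum_squares_bounds (t - a) (f t - b)) as [H1 [H2 _]]. repeat split; lra.
  - intros Hbox eps He. destruct (Hbox (eps / 2)) as [t [Ht [H1 H2]]]; [lra|].
    exists t. split; [exact Ht|].
    destruct (sqrt_sum_squares_bounds (t - a) (f t - b)) as [_ [_ H3]]. lra.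
Qed.

Lemma closure_graph_unit_square f a b : (forall t, 0 <= f t <= 1) ->
  in_closure_graph f a b -> 0 <= a <= 1 /\ 0 <= b <= 1.
Proof.
  intros Hf Hcl. rewrite closure_graph_box in Hcl. rewrite <- !in_cyl_nil.
  split; apply in_cyl_closed; intros e He; destruct (Hcl e He) as [t [Ht [Hta Htb]]].
  - exists t. rewrite in_cyl_nil. auto.
  - exists (f t). rewrite in_cyl_nil. auto.
Qed.

Lemma not_near_two_points y b c :
  Rabs (y - b) < Rabs (b - c) / 2 -> Rabs (y - c) < Rabs (b - c) / 2 -> False.
Proof.
  intros H1 H2. assert (H := Rabs_triang (b - y) (y - c)).
  replace (b - y + (y - c)) with (b - c) in H by ring.
  rewrite Rabs_minus_sym in H1. lra.
Qed.

Lemma closure_off_graph_right f a b : in_closure_graph f a b ->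
  left_continuous_at f a -> b <> f a ->
  forall e, 0 < e -> exists t, a < t < a + e /\ t <= 1 /\ Rabs (f t - b) < e.
Proof.
  intros Hcl Hlc Hb e He. rewrite closure_graph_box in Hcl.
  assert (Hdl : 0 < Rabs (b - f a)) by (apply Rabs_pos_lt; lra).
  destruct (Hlc (Rabs (b - f a) / 2)) as [eta [Heta Hleft]]; [lra|].
  set (e' := Rmin e (Rmin (Rabs (b - f a) / 2) eta)).
  assert (He'1 : e' <= e) by apply Rmin_l.
  assert (He'2 : e' <= Rabs (b - f a) / 2) by (eapply Rle_trans; [apply Rmin_r|apply Rmin_l]).
  assert (He'3 : e' <= eta) by (eapply Rle_trans; [apply Rmin_r|apply Rmin_r]).
  destruct (Hcl e') as [t [Ht [Hta Htb]]]; [repeat apply Rmin_pos; lra|].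
  apply Rabs_def2 in Hta.
  destruct (Rle_dec t a) as [Hle|Hgt].
  - exfalso. apply (not_near_two_points (f t) b (f a)); [lra|]. apply Hleft. lra.
  - exists t. repeat split; lra.
Qed.

Lemma right_continuous_not_approached f a b :
  right_continuous_at f a -> b <> f a ->
  ~ (forall e, 0 < e -> exists t, a < t < a + e /\ Rabs (f t - b) < e).
Proof.
  intros Hrc Hb Happ.
  assert (Hdl : 0 < Rabs (b - f a)) by (apply Rabs_pos_lt; lra).
  destruct (Hrc (Rabs (b - f a) / 2)) as [eta [Heta Hright]]; [lra|].
  destruct (Happ (Rmin eta (Rabs (b - f a) / 2))) as [t [Ht Htb]];
    [apply Rmin_pos; lra|].
  assert (H1 := Rmin_l eta (Rabs (b - f a) / 2)).
  assert (H2 := Rmin_r eta (Rabs (b - f a) / 2)).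
  apply (not_near_two_points (f t) b (f a)); [lra|]. apply Hright. lra.
Qed.

Lemma Ix_of_right_approach w b :
  (forall e, 0 < e -> exists t, list_val w < t < list_val w + e /\ Rabs (Rmap t - b) < e) ->
  Ix w b.
Proof.
  intros Happ. apply in_cyl_closed. intros e He.
  assert (HE := inv_pow2_pos (length w)).
  destruct (Happ (Rmin e (/ 2 ^ length w))) as [t [Ht Htb]]; [apply Rmin_pos; lra|].
  assert (H1 := Rmin_l e (/ 2 ^ length w)). assert (H2 := Rmin_r e (/ 2 ^ length w)).
  exists (Rmap t). split; [apply Rmap_right_window_in_Ix; lra | lra].
Qed.

Lemma Rmap_closure a b : in_closure_graph Rmap a b <->
  (0 <= a <= 1 /\ b = Rmap a) \/ (exists w, a = list_val w /\ Ix w b).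
Proof.
  split.
  - intros Hcl.
    destruct (closure_graph_unit_square Rmap a b Rmap_bounds Hcl) as [Ha Hb].
    destruct (Req_dec a 0) as [Ha0|Ha0].
    { right. exists nil. split; [exact Ha0|]. apply in_cyl_nil, Hb. }
    destruct (Req_dec b (Rmap a)) as [Hba|Hba]; [left; auto|]. right.
    assert (Happ := closure_off_graph_right Rmap a b Hcl
                      (Rmap_left_continuous a ltac:(lra)) Hba).
    destruct (classic (exists w, a = list_val w)) as [[w Hw]|Hnd].
    + exists w. split; [exact Hw|]. apply Ix_of_right_approach. intros e He.
      destruct (Happ e He) as [t [Ht [_ Htb]]]. exists t. rewrite <- Hw. auto.
    + exfalso. destruct (Happ 1) as [t1 [Ht1 [Ht1' _]]]; [lra|].
      apply (right_continuous_not_approached Rmap a b); [|exact Hba|].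
      * apply Rmap_right_continuous_nondyadic; [lra|]. intros w Hw. apply Hnd. eauto.
      * intros e He. destruct (Happ e He) as [t [Ht [_ Htb]]]. eauto.
  - rewrite closure_graph_box.
    intros [[Ha ->]|[w [-> HI]]] e He.
    + exists a. unfold Rminus. rewrite !Rplus_opp_r, Rabs_R0. auto.
    + assert (HE := inv_pow2_pos (length w)). assert (Hw := list_val_bounds w).
      destruct (Rmap_dense_right w b e (Rmin e (/ 2 ^ length w)) HI He) as [t [Ht Htb]];
        [apply Rmin_pos; lra|].
      assert (H1 := Rmin_l e (/ 2 ^ length w)). assert (H2 := Rmin_r e (/ 2 ^ length w)).
      exists t. repeat split; try lra. apply Rabs_def1; lra.
Qed.

Theorem proposition4p1 :
  (forall a b : R,
     in_closure_graph Rmap a b <->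
       ((0 <= a <= 1 /\ b = Rmap a) \/
        (exists w : list bool, a = list_val w /\ Ix w b)))
  /\
  (forall w : list bool, list_val w <> 0 ->
     (forall y : R,
        Ix w y <->
          (Rbar_le (liminf_right Rmap (list_val w)) (Finite y) /\
           Rbar_le (Finite y) (limsup_right Rmap (list_val w))))
     /\ ~ Ix w (Rmap (list_val w))).
Proof.
  split.
  - apply Rmap_closure.
  - intros w Hw. split.
    + intros y. rewrite Rmap_liminf_dyadic, Rmap_limsup_dyadic. reflexivity.
    + apply Rmap_dyadic_outside, Hw.
Qed.
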